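(* Let $I=\{a,b,c,d,e\}$ and $X=I^{\mathbb N_0}$ with the metric $\rho(x,y)=0$ if $x=y$ and $\rho(x,y)=\frac1{i+1}$ where $i=\min\{j:x_j\ne y_j\}$ otherwise. Let $\sigma$ be the shift $\sigma(x_0,x_1,\dots)=(x_1,x_2,\dots)$. Let $U=\{0,1,2,3\}$ and define $F_0=\sigma^2$, $F_1=\sigma^3$, $F_2\equiv b^\infty$ (constant map), and $F_3(x)=(ab)^\infty$ if $x_0=b$, $F_3(x)=b^\infty$ otherwise. Consider the control system $x_{n+1}=F_{u_n}(x_n)$ and let $Q\subset X$ be the set of all sequences that are infinite concatenations $w_0w_1w_2\cdots$ of words $w_i\in\{ab,\,cde\}$. Then $Q$ is (compact and) equi-invariant in the mean, but not finitely equi-invariant.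
   Context: For $\omega=(\omega_0,\omega_1,\dots)\in\mathscr U=U^{\mathbb N_0}$ and $x\in X$: $\phi(0,x,\omega)=x$, $\phi(k,x,\omega)=F_{\omega_{k-1}}\circ\cdots\circ F_{\omega_0}(x)$. $d(y,Q)=\inf_{q\in Q}\rho(y,q)$, $B_\varepsilon(Q)=\{y:d(y,Q)<\varepsilon\}$, $B(x,\delta)$ open ball, $\mathbb N=\{1,2,\dots\}$. A point $x\in Q$ is a finitely equi-invariant point of $Q$ if for every $\varepsilon>0$ there exist $\delta>0$ and a finite set $F\subset\mathscr U$ such that for every $y\in B(x,\delta)\cap Q$ there is $\omega\in F$ with $\phi(k,y,\omega)\in B_\varepsilon(Q)$ for all $k\in\mathbb N_0$. It is an equi-invariant point in the mean of $Q$ if for every $\varepsilon>0$ there exist $\delta>0$ and $\omega\in\mathscr U$ such that $\frac1n\sum_{i=0}^{n-1}d(\phi(i,y,\omega),Q)<\varepsilon$ for all $n\in\mathbb N$ and all $y\in B(x,\delta)\cap Q$. $Q$ has one of these properties if all its points do. *)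

From HB Require Import structures.
From mathcomp Require Import all_boot all_order all_algebra.
From mathcomp Require Import all_classical all_reals.
Set Implicit Arguments. Unset Strict Implicit. Unset Printing Implicit Defensive.
Import Order.TTheory GRing.Theory Num.Theory.
Local Open Scope classical_set_scope.
Local Open Scope ring_scope.

Fixpoint phi (X U : Type) (F : U -> X -> X) (k : nat) (x : X) (w : nat -> U) : X :=
  match k with
  | 0%N => x
  | k'.+1 => F (w k') (phi F k' x w)
  end.

Section General.
Context (R : realType) (X U : Type) (rho : X -> X -> R) (F : U -> X -> X).

Definition dist (y : X) (Q : set X) : R := inf [set rho y q | q in Q].

Definition nbhdQ (eps : R) (Q : set X) : set X := [set y | dist y Q < eps].

Definition oball (x : X) (delta : R) : set X := [set y | rho x y < delta].

Definition finitely_equi_invariant_point (Q : set X) (x : X) : Prop :=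
  Q x /\
  forall eps : R, 0 < eps ->
    exists delta : R, 0 < delta /\
    exists Fs : set (nat -> U), finite_set Fs /\
      forall y, oball x delta y -> Q y ->
        exists w, Fs w /\ forall k : nat, nbhdQ eps Q (phi F k y w).

Definition equi_invariant_in_mean_point (Q : set X) (x : X) : Prop :=
  Q x /\
  forall eps : R, 0 < eps ->
    exists delta : R, 0 < delta /\
    exists w : nat -> U,
      forall (n : nat) (y : X), (1 <= n)%N -> oball x delta y -> Q y ->
        (n%:R)^-1 * (\sum_(i < n) dist (phi F i y w) Q) < eps.

Definition finitely_equi_invariant (Q : set X) : Prop :=
  forall x, Q x -> finitely_equi_invariant_point Q x.

Definition equi_invariant_in_mean (Q : set X) : Prop :=
  forall x, Q x -> equi_invariant_in_mean_point Q x.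

Definition rho_open (O : set X) : Prop :=
  forall x, O x -> exists r : R, 0 < r /\ oball x r `<=` O.

Definition rho_compact (Q : set X) : Prop :=
  forall C : set (set X), (forall O, C O -> rho_open O) ->
    Q `<=` \bigcup_(O in C) O ->
    exists D : set (set X), [/\ D `<=` C, finite_set D & Q `<=` \bigcup_(O in D) O].

End General.

Inductive I5 : Type := a | b | c | d | e.

Definition Xs : Type := nat -> I5.

(* index of first difference (only meaningful when x <> y) *)
Definition first_diff (x y : Xs) : nat :=
  xget 0%N [set i | x i <> y i /\ forall j, (j < i)%N -> x j = y j].

Definition rhoX (R : realType) (x y : Xs) : R :=
  if pselect (x = y) then 0 else ((first_diff x y).+1%:R)^-1.

Definition shift (x : Xs) : Xs := fun n => x n.+1.

Definition const_b : Xs := fun _ => b.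
Definition ab_inf : Xs := fun n => if odd n then b else a.

Inductive U4 : Type := u0 | u1 | u2 | u3.

Definition Fex (u : U4) (x : Xs) : Xs :=
  match u with
  | u0 => shift (shift x)
  | u1 => shift (shift (shift x))
  | u2 => const_b
  | u3 => match x 0%N with b => ab_inf | _ => const_b end
  end.

Definition word (t : bool) : seq I5 := if t then [:: a; b] else [:: c; d; e].

Definition word_start (ws : nat -> bool) (k : nat) : nat :=
  (\sum_(i < k) size (word (ws i)))%N.

Definition Qex : set Xs :=
  [set x | exists ws : nat -> bool,
     forall k j : nat, (j < size (word (ws k)))%N ->
       x (word_start ws k + j)%N = nth a (word (ws k)) j].

(* The metric balls of radius 1/(n+1) are the cylinders of sequences sharing
   n first letters.  A point of Q has a unique decomposition into words ab
   and cde, read greedily from its letters; it depends continuously on the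
   point, which makes Q closed, hence compact by a Koenig-lemma argument.

   Mean invariance: near x in Q, follow the decomposition of x for M words
   (F_0 skips ab, F_1 skips cde), then jump out of Q once with F_2 and into
   the fixed point (ab)^oo with F_3; the average distance to Q is <= 1/(M+1).

   No finite equi-invariance at (ab)^oo: the points (ab)^N cde (ab)^oo of Q
   converge to (ab)^oo, and the only controls keeping their orbits within
   distance 1 of Q are F_0 (N times) followed by F_1, which are pairwise
   distinct for different N, so no finite family of controls suffices. *)

From Pilot Require Import Defs.
From mathcomp Require Import all_boot all_order all_algebra.
From mathcomp Require Import all_classical all_reals.
From mathcomp Require Import zify.
Import Order.TTheory GRing.Theory Num.Theory.
Set Implicit Arguments. Unset Strict Implicit. Unset Printing Implicit Defensive.
Local Open Scope classical_set_scope.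
Local Open Scope ring_scope.

Definition agree_upto (n : nat) (x y : Xs) : Prop :=
  forall j, (j < n)%N -> x j = y j.

Definition cylinder (n : nat) (p : Xs) : set Xs := [set y | agree_upto n y p].

Lemma first_diff_spec (x y : Xs) : x <> y ->
  x (Defs.first_diff x y) <> y (Defs.first_diff x y) /\ agree_upto (Defs.first_diff x y) x y.
Proof.
move=> nxy.
have exP : exists n, `[< x n <> y n >].
  apply/not_existsP => none; apply: nxy; apply: funext => n.
  by apply: contrapT => /asboolP /none.
case: (ex_minnP exP) => m /asboolP neq_m min_m.
have agree_m : agree_upto m x y.
  by move=> j jm; apply: contrapT => /asboolP /min_m; rewrite leqNgt jm.
rewrite /Defs.first_diff (@xget_unique _ _ _ m) // => k [neq_k agree_k].
apply/eqP; rewrite eqn_leq min_m ?andbT; last by apply/asboolP.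
by rewrite leqNgt; apply/negP => /agree_k.
Qed.

Section CylinderMetric.
Variable R : realType.

Lemma rho_ge0 (x y : Xs) : 0 <= @rhoX R x y.
Proof. by rewrite /rhoX; case: pselect => [//|?]; rewrite invr_ge0. Qed.

Lemma rho_refl (x : Xs) : @rhoX R x x = 0.
Proof. by rewrite /rhoX; case: pselect. Qed.

Lemma rho_agree n (x y : Xs) : agree_upto n x y -> @rhoX R x y <= (n.+1)%:R^-1.
Proof.
move=> xy; rewrite /rhoX; case: pselect => [?|nxy]; first by rewrite invr_ge0.
have [neq_fd _] := first_diff_spec nxy.
have le_n : (n <= Defs.first_diff x y)%N by rewrite leqNgt; apply/negP => /xy.
by rewrite lef_pV2 ?posrE ?ltr0n // ler_nat.
Qed.

Lemma rho_lt_agree n (x y : Xs) : @rhoX R x y < (n.+1%:R)^-1 -> agree_upto n x y.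
Proof.
rewrite /rhoX; case: pselect => [exy _ j _|nxy]; first by rewrite exy.
have [_ agree] := first_diff_spec nxy.
rewrite ltf_pV2 ?posrE ?ltr0n // ltr_nat ltnS => lt_n j jn.
by apply: agree; apply: leq_trans jn (ltnW lt_n).
Qed.

Lemma rho_le1 (x y : Xs) : @rhoX R x y <= 1.
Proof. by rewrite -invr1; apply: (@rho_agree 0). Qed.

Lemma rho_diff0 (x y : Xs) : x 0%N <> y 0%N -> @rhoX R x y = 1.
Proof.
move=> neq0; rewrite /rhoX; case: pselect => [exy|nxy]; first by rewrite exy in neq0.
have [_ agree] := first_diff_spec nxy.
suff -> : Defs.first_diff x y = 0%N by rewrite invr1.
case E: (Defs.first_diff x y) => [//|k]; exfalso.
by apply: neq0; apply: agree; rewrite E.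
Qed.

Lemma small_radius (eps : R) : 0 < eps -> exists n : nat, (n.+1%:R)^-1 < eps.
Proof.
move=> eps0; exists (Num.truncn eps^-1).
rewrite -[X in _ < X]invrK ltf_pV2 ?posrE ?invr_gt0 ?ltr0n //.
exact: truncnS_gt.
Qed.

Lemma dist_le (y q : Xs) (Q : set Xs) : Q q -> dist (@rhoX R) y Q <= rhoX R y q.
Proof.
move=> Qq; apply: ge_inf; last by exists q.
by exists 0 => _ [z _ <-]; apply: rho_ge0.
Qed.

Lemma dist_in (y : Xs) (Q : set Xs) : Q y -> dist (@rhoX R) y Q <= 0.
Proof. by move=> Qy; rewrite -(rho_refl y) dist_le. Qed.

Lemma dist_le1 (y q : Xs) (Q : set Xs) : Q q -> dist (@rhoX R) y Q <= 1.
Proof. by move=> Qq; apply: le_trans (@dist_le y q Q Qq) (rho_le1 y q). Qed.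

Lemma dist_ge (y : Xs) (Q : set Xs) (l : R) : Q !=set0 ->
  (forall q, Q q -> l <= rhoX R y q) -> l <= dist (@rhoX R) y Q.
Proof.
move=> [q Qq] lb; apply: lb_le_inf; first by exists (rhoX R y q), q.
by move=> _ [z Qz <-]; apply: lb.
Qed.

End CylinderMetric.

Definition concat_of (x : Xs) (ws : nat -> bool) : Prop :=
  forall k j : nat, (j < size (word (ws k)))%N ->
    x (word_start ws k + j)%N = nth a (word (ws k)) j.

Lemma word_start0 (ws : nat -> bool) : word_start ws 0 = 0%N.
Proof. by rewrite /word_start big_ord0. Qed.

Lemma word_startS (ws : nat -> bool) k :
  word_start ws k.+1 = (word_start ws k + size (word (ws k)))%N.
Proof. by rewrite /word_start big_ord_recr. Qed.

(* The decomposition of a point of Q is forced: the word starting at a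
   position is ab if the letter there is a, and cde otherwise. *)
Definition letter_word (l : I5) : bool := if l is a then true else false.

Fixpoint parse_pos (x : Xs) (k : nat) : nat :=
  if k is k'.+1
  then (parse_pos x k' + size (word (letter_word (x (parse_pos x k')))))%N
  else 0%N.

Definition parse_word (x : Xs) (k : nat) : bool := letter_word (x (parse_pos x k)).

Lemma word_start_parse (x : Xs) k : word_start (parse_word x) k = parse_pos x k.
Proof. by elim: k => [|k IH]; rewrite ?word_start0 // word_startS IH. Qed.

Lemma concat_of_parse (x : Xs) (ws : nat -> bool) : concat_of x ws ->
  forall k, word_start ws k = parse_pos x k /\ ws k = parse_word x k.
Proof.
move=> xws; elim=> [|k [pos_k word_k]].
  by have := xws 0%N 0%N; rewrite word_start0 /parse_word /=; case: (ws 0%N) => /= ->.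
have pos_Sk : word_start ws k.+1 = parse_pos x k.+1.
  by rewrite word_startS /= pos_k word_k.
split=> //; have := xws k.+1 0%N; rewrite addn0 pos_Sk /parse_word.
by case: (ws k.+1) => /= ->.
Qed.

Lemma Q_parse (x : Xs) : Qex x <-> concat_of x (parse_word x).
Proof.
split=> [[ws xws] k j|]; last by exists (parse_word x).
have [pos_k word_k] := concat_of_parse xws k.
by rewrite word_start_parse -pos_k -word_k; apply: xws.
Qed.

Lemma parse_pos_mono (x : Xs) i k : (i <= k)%N -> (parse_pos x i <= parse_pos x k)%N.
Proof.
move=> /subnK <-; elim: (k - i)%N => [|m IH] //.
by rewrite addSn /= (leq_trans IH) // leq_addr.
Qed.

(* Words have length at most 3. *)
Lemma parse_pos_le (x : Xs) k : (parse_pos x k <= 3 * k)%N.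
Proof.
elim: k => [|k IH] //=; rewrite mulnS addnC leq_add //.
by case: (x (parse_pos x k)).
Qed.

Lemma parse_agree (x y : Xs) n : agree_upto n x y ->
  forall k, (parse_pos x k < n)%N ->
    parse_pos x k = parse_pos y k /\ parse_word x k = parse_word y k.
Proof.
move=> xy; elim=> [|k IH] lt_n; first by rewrite /parse_word /= xy.
have [pos_k word_k] := IH (leq_ltn_trans (parse_pos_mono x (leqnSn k)) lt_n).
have pos_Sk : parse_pos x k.+1 = parse_pos y k.+1.
  by move: word_k; rewrite /= /parse_word => ->; rewrite pos_k.
by split=> //; rewrite /parse_word xy // -pos_Sk.
Qed.

Lemma Q_closed (x : Xs) :
  (forall n, exists y, Qex y /\ agree_upto n x y) -> Qex x.
Proof.
move=> near_Q; apply/Q_parse => k j lt_j.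
have [y [/Q_parse Qy xy]] := near_Q (parse_pos x k + 3)%N.
have [pos_k word_k] : parse_pos x k = parse_pos y k /\ parse_word x k = parse_word y k.
  by apply: (parse_agree xy); rewrite -addn1 leq_add2l.
have le3 : (j < 3)%N by move: lt_j; case: (parse_word x k) => /=; lia.
rewrite word_start_parse xy ?ltn_add2l //.
by have := Qy k j; rewrite word_start_parse pos_k word_k; apply; rewrite -word_k.
Qed.

Definition drop_prefix (s : nat) (y : Xs) : Xs := fun j => y (s + j)%N.

Lemma parse_pos_drop (y : Xs) k i :
  parse_pos y (k + i) = (parse_pos y k + parse_pos (drop_prefix (parse_pos y k) y) i)%N.
Proof.
elim: i => [|i IH]; first by rewrite !addn0.
by rewrite addnS /= IH /drop_prefix addnA.
Qed.

Lemma Q_drop (y : Xs) k : Qex y -> Qex (drop_prefix (parse_pos y k) y).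
Proof.
move/Q_parse => Qy; apply/Q_parse => i j.
have -> : parse_word (drop_prefix (parse_pos y k) y) i = parse_word y (k + i).
  by rewrite /parse_word parse_pos_drop.
rewrite word_start_parse => lt_j.
rewrite {1}/drop_prefix addnA -parse_pos_drop.
by have := Qy (k + i)%N j; rewrite word_start_parse; apply.
Qed.

Lemma ab_inf_Q : Qex ab_inf.
Proof.
have start k : word_start (fun _ => true) k = (2 * k)%N.
  by elim: k => [|k IH]; rewrite ?word_start0 // word_startS IH /=; lia.
exists (fun _ => true) => k j /=; rewrite start /ab_inf.
by case: j => [|[|]] //= _; rewrite ?addn0 ?addn1 /= oddM.
Qed.

Lemma shift2_ab : shift (shift ab_inf) = ab_inf.
Proof. by apply: funext => n; rewrite /shift /ab_inf /= negbK. Qed.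

(* Compactness of closed sets, by Koenig's lemma: if the cylinder of length
   0 is not finitely covered, one of its five children is not either, and
   following such children forever produces a point no neighbourhood of
   which is finitely covered. *)
Section Compactness.
Variables (Q : set Xs) (C : set (set Xs)).

Definition finitely_covered (n : nat) (p : Xs) : Prop :=
  exists D : set (set Xs),
    [/\ D `<=` C, finite_set D & Q `&` cylinder n p `<=` \bigcup_(O in D) O].

Definition extend (p : Xs) (n : nat) (l : I5) : Xs :=
  fun j => if j == n then l else p j.

Lemma covered_agree n (p q : Xs) :
  agree_upto n p q -> finitely_covered n p -> finitely_covered n q.
Proof.
move=> pq [D [CD fD cov]]; exists D; split=> // y [Qy yq]; apply: cov.
by split=> // j jn; rewrite yq // pq.
Qed.

(* A cylinder is the union of its five children. *)
Lemma covered_children n (p : Xs) :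
  (forall l, finitely_covered n.+1 (extend p n l)) -> finitely_covered n p.
Proof.
move=> /choice [D covD].
have CD l : D l `<=` C by case: (covD l).
have fD l : finite_set (D l) by case: (covD l).
exists (D a `|` D b `|` D c `|` D d `|` D e); split.
- by move=> O [[[[]|]|]|]; apply: CD.
- by rewrite !finite_setU; do !split; apply: fD.
- move=> y [Qy yp].
  have y_child : cylinder n.+1 (extend p n (y n)) y.
    move=> j; rewrite ltnS leq_eqVlt /extend => /orP[/eqP ->|jn].
      by rewrite eqxx.
    by rewrite (ltn_eqF jn) yp.
  case: (covD (y n)) => _ _ /(_ y (conj Qy y_child)) [O DO Oy].
  exists O => //; move: DO; case: (y n) => DO; by [
    left; left; left; left | left; left; left; right | left; left; right |
    left; right | right].
Qed.

Lemma uncovered_branch (p : Xs) : ~ finitely_covered 0 p ->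
  exists x : Xs, forall n, ~ finitely_covered n x.
Proof.
move=> p_bad.
have child (np : nat * Xs) : exists l,
    ~ finitely_covered np.1 np.2 -> ~ finitely_covered np.1.+1 (extend np.2 np.1 l).
  case: np => n q /=; have [[l l_bad]|all_good] :=
    EM (exists l, ~ finitely_covered n.+1 (extend q n l)); first by exists l.
  exists a => q_bad; exfalso; apply/q_bad/covered_children => l.
  by apply: contrapT => l_bad; apply: all_good; exists l.
have [h h_bad] := choice child.
pose fix branch (n : nat) : Xs :=
  if n is n'.+1 then extend (branch n') n' (h (n', branch n')) else p.
have branch_bad n : ~ finitely_covered n (branch n).
  by elim: n => [|n IH] //; apply: (h_bad (n, branch n)).
have branch_agree n : agree_upto n (fun k => branch k.+1 k) (branch n).
  elim: n => [//|n IH] j; rewrite ltnS leq_eqVlt => /orP[/eqP -> //|jn].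
  have -> : branch n.+1 j = branch n j by rewrite /= /extend (ltn_eqF jn).
  exact: IH.
exists (fun n => branch n.+1 n) => n cov; apply: (branch_bad n).
exact: covered_agree (branch_agree n) cov.
Qed.

End Compactness.

(* Every closed subset of X is compact: the limit point of the uncovered
   branch lies in Q, and a single open set of the cover contains one of
   the cylinders around it. *)
Lemma closed_compact (R : realType) (Q : set Xs) :
  (forall x, (forall n, exists y, Q y /\ agree_upto n x y) -> Q x) ->
  rho_compact (@rhoX R) Q.
Proof.
move=> closedQ C C_open QC.
have [[D [CD fD cov]]|root_bad] := EM (finitely_covered Q C 0 (fun _ => a)).
  by exists D; split=> // y Qy; apply: cov.
have [x x_bad] := uncovered_branch root_bad.
have Qx : Q x.
  apply: closedQ => n; apply: contrapT => no_y; apply: (x_bad n).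
  exists set0; split; [by [] | exact: finite_set0 | move=> y [Qy yx]].
  by exfalso; apply: no_y; exists y; split=> // j jn; rewrite yx.
have [O CO Ox] := QC x Qx.
have [r [r0 ball_O]] := C_open O CO x Ox.
have [n n_r] := small_radius r0.
exfalso; apply: (x_bad n); exists [set O]; split; [by move=> ? -> | exact: finite_set1 |].
move=> y [Qy yx]; exists O => //; apply: ball_O.
by apply: le_lt_trans n_r; apply: rho_agree => j jn; rewrite yx.
Qed.

Lemma Q_compact (R : realType) : rho_compact (@rhoX R) Qex.
Proof. exact/closed_compact/Q_closed. Qed.

Lemma phiS (X U : Type) (F : U -> X -> X) k (x : X) (w : nat -> U) :
  phi F k.+1 x w = F (w k) (phi F k x w).
Proof. by []. Qed.

(* The control used near x: follow the parse of x for M words (F_0 skips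
   an ab, F_1 skips a cde), then leave Q once with F_2 (to b^oo), enter
   (ab)^oo with F_3, and stay there with F_0. *)
Definition follow (x : Xs) (M : nat) (i : nat) : U4 :=
  if (i < M)%N then (if parse_word x i then u0 else u1)
  else if i == M then u2 else if i == M.+1 then u3 else u0.

Lemma phi_follow_prefix (x y : Xs) M k : (k <= M)%N ->
  phi Fex k y (follow x M) = drop_prefix (parse_pos x k) y.
Proof.
elim: k => [|k IH] kM; first exact: funext.
rewrite phiS IH ?(ltnW kM) // /follow kM /parse_word /=.
by case: (x (parse_pos x k)); apply: funext => j; rewrite /shift /drop_prefix /=;
  congr y; lia.
Qed.

Lemma phi_follow_tail (x y : Xs) M j : phi Fex (M.+2 + j) y (follow x M) = ab_inf.
Proof.
elim: j => [|j IH].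
  have wM : follow x M M = u2 by rewrite /follow ltnn eqxx.
  have wM1 : follow x M M.+1 = u3.
    by rewrite /follow ltnNge leqnSn (gtn_eqF (ltnSn M)) eqxx.
  by rewrite addn0 !phiS wM wM1.
have w_tail : follow x M (M.+2 + j) = u0.
  rewrite /follow; case: ifP => [lt|_]; first lia.
  by do 2 (case: eqP => [eq|_]; first lia).
by rewrite addnS phiS IH w_tail; exact: shift2_ab.
Qed.

Lemma dist_follow (R : realType) (x y : Xs) M i :
  Qex y -> agree_upto (3 * M).+1 x y ->
  dist (@rhoX R) (phi Fex i y (follow x M)) Qex <= (i == M.+1)%:R.
Proof.
move=> Qy xy; case: (ltngtP i M.+1) => [iM|iM|->]; last exact: dist_le1 ab_inf_Q.
- apply: dist_in; rewrite ltnS in iM; rewrite phi_follow_prefix //.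
  have [-> _] : parse_pos x i = parse_pos y i /\ parse_word x i = parse_word y i.
    apply: (parse_agree xy); rewrite ltnS (leq_trans (parse_pos_le x i)) //.
    by rewrite leq_mul2l.
  exact: Q_drop.
- rewrite (_ : i = M.+2 + (i - M.+2))%N; last by lia.
  by rewrite phi_follow_tail; apply: dist_in; exact: ab_inf_Q.
Qed.

Lemma sum_indicator (R : realType) n k :
  \sum_(i < n) (((i : nat) == k)%:R : R) = ((k < n)%N)%:R.
Proof.
elim: n => [|n IH]; first by rewrite big_ord0.
rewrite big_ord_recr /= IH; case: (ltngtP k n) => [kn|nk|->].
- by rewrite addr0 ltnS ltnW.
- by rewrite ltnS leqNgt nk addr0.
- by rewrite add0r ltnSn.
Qed.

Lemma mean_indicator_lt (R : realType) (eps : R) M n : 0 < eps ->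
  (M.+1%:R)^-1 < eps -> (1 <= n)%N -> (n%:R)^-1 * ((M.+1 < n)%N)%:R < eps.
Proof.
move=> eps0 M_eps n1; case: ltnP => Mn; last by rewrite mulr0.
rewrite mulr1; apply: le_lt_trans M_eps.
by rewrite lef_pV2 ?posrE ?ltr0n // ler_nat ltnW.
Qed.

(* Part 2: with M such that 1/(M+1) < eps, the control [follow x M] works
   on the ball of radius 1/(3M+2), i.e. the cylinder of length 3M+1. *)
Lemma Q_mean_invariant (R : realType) : equi_invariant_in_mean (@rhoX R) Fex Qex.
Proof.
move=> x Qx; split=> // eps eps0.
have [M M_eps] := small_radius eps0.
exists ((3 * M).+2%:R)^-1; split; first by rewrite invr_gt0 ltr0n.
exists (follow x M) => n y n1 /rho_lt_agree xy Qy.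
apply: le_lt_trans (mean_indicator_lt eps0 M_eps n1).
rewrite ler_wpM2l ?invr_ge0 ?ler0n // -sum_indicator.
by apply: ler_sum => i _; apply: dist_follow.
Qed.

Lemma phiSr (X U : Type) (F : U -> X -> X) k (x : X) (w : nat -> U) :
  phi F k.+1 x w = phi F k (F (w 0%N) x) (fun i => w i.+1).
Proof. by elim: k => [|k IH] //; rewrite phiS IH. Qed.

Definition prepend (t : bool) (z : Xs) : Xs :=
  fun n => if (n < size (word t))%N then nth a (word t) n
           else z (n - size (word t))%N.

Lemma Q_prepend t (z : Xs) : Qex z -> Qex (prepend t z).
Proof.
move=> [ws zws]; exists (fun k => if k is k'.+1 then ws k' else t).
have start k : word_start (fun k => if k is k'.+1 then ws k' else t) k.+1
               = (size (word t) + word_start ws k)%N.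
  elim: k => [|k IH]; first by rewrite word_startS !word_start0 addn0.
  by rewrite word_startS IH word_startS addnA.
case=> [|k] j lt_j; first by rewrite word_start0 /prepend /= lt_j.
by rewrite start /prepend -addnA ltnNge leq_addr /= addKn; apply: zws.
Qed.

Lemma prepend_agree t (z z' : Xs) m :
  agree_upto m z z' -> agree_upto (m + size (word t)) (prepend t z) (prepend t z').
Proof.
move=> zz' j lt_j; rewrite /prepend; case: ifP => // /negbT; rewrite -leqNgt => le_j.
by apply: zz'; lia.
Qed.

(* The points y_N = (ab)^N cde (ab)^oo of Q tend to (ab)^oo. *)
Definition y_seq (N : nat) : Xs := iter N (prepend true) (prepend false ab_inf).

Lemma y_seq_Q N : Qex (y_seq N).
Proof. by elim: N => [|N IH]; apply: Q_prepend => //; apply: ab_inf_Q. Qed.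

Lemma y_seq_agree N : agree_upto (2 * N) ab_inf (y_seq N).
Proof.
have ab_fixed : prepend true ab_inf = ab_inf.
  apply: funext => -[|[|n]] //.
  by rewrite /prepend /= subSS subSS subn0 /ab_inf /= negbK.
elim: N => [//|N IH]; rewrite mulnS addnC -[X in agree_upto _ X]ab_fixed.
exact: (prepend_agree (t := true) IH).
Qed.

Definition Q_head (z : Xs) : Prop := z 0%N = a \/ z 0%N = c.

Lemma Q_head_of_Q (q : Xs) : Qex q -> Q_head q.
Proof.
move/Q_parse => Qq; have := Qq 0%N 0%N; rewrite word_start_parse /= /Q_head.
by case: (parse_word q 0%N) => /= ->; auto.
Qed.

Lemma near_Q_head (R : realType) (z : Xs) : nbhdQ (@rhoX R) 1 Qex z -> Q_head z.
Proof.
rewrite /nbhdQ /= => near; apply: contrapT => not_head.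
suff : 1 <= dist (@rhoX R) z Qex by rewrite leNgt near.
apply: dist_ge; first by exists ab_inf; apply: ab_inf_Q.
move=> q /Q_head_of_Q q_head; rewrite rho_diff0 // => eq0.
by apply: not_head; rewrite /Q_head eq0.
Qed.

Lemma forced_step_ab N u :
  Q_head (Fex u (y_seq N.+1)) -> u = u0 /\ Fex u (y_seq N.+1) = y_seq N.
Proof.
have second : y_seq N 1%N = b \/ y_seq N 1%N = d by case: N => [|N]; [right|left].
case: u => /=; rewrite /Q_head /shift /prepend //=.
- by move=> _; split=> //; apply: funext => j; rewrite /= !subSS subn0.
- by case: second => -> [].
- by case.
- by case.
Qed.

Lemma forced_step_cde u : Q_head (Fex u (y_seq 0)) -> u = u1.
Proof. by case: u => //=; rewrite /Q_head /shift /prepend /=; case. Qed.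

Lemma forced_controls N (w : nat -> U4) :
  (forall k, Q_head (phi Fex k (y_seq N) w)) ->
  (forall k, (k < N)%N -> w k = u0) /\ w N = u1.
Proof.
elim: N w => [|N IH] w heads; first by split=> //; apply: forced_step_cde (heads 1%N).
have [w0 step] := forced_step_ab (heads 1%N).
have [w_pre w_last] : (forall k, (k < N)%N -> w k.+1 = u0) /\ w N.+1 = u1.
  by apply: IH => k; rewrite -step -phiSr; apply: heads.
by split=> // -[|k] // /w_pre.
Qed.

(* Part 3: a finite family of controls serving all y_(L+t) near (ab)^oo
   would contain the pairwise distinct controls forced for each t. *)
Lemma Q_not_finitely_invariant (R : realType) :
  ~ finitely_equi_invariant (@rhoX R) Fex Qex.
Proof.
move=> fin; have [_ /(_ 1 ltr01) [delta [delta0 [Fs [Fs_fin Fs_ok]]]]] :=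
  fin ab_inf ab_inf_Q.
have [L L_delta] := small_radius delta0.
have ctrl t : exists w, Fs w /\
    forall k, nbhdQ (@rhoX R) 1 Qex (phi Fex k (y_seq (L + t)) w).
  apply: Fs_ok (y_seq_Q _); apply: le_lt_trans L_delta; apply: rho_agree.
  by move=> j jL; apply: y_seq_agree; lia.
have [f f_ok] := choice ctrl.
have forced t := forced_controls (fun k => near_Q_head ((f_ok t).2 k)).
have f_inj : injective f.
  move=> t s ft_fs; have [t_pre t_last] := forced t; have [s_pre s_last] := forced s.
  case: (ltngtP t s) => // lt_ts; exfalso.
  - by have := s_pre (L + t)%N; rewrite ltn_add2l -ft_fs t_last => /(_ lt_ts).
  - by have := t_pre (L + s)%N; rewrite ltn_add2l ft_fs s_last => /(_ lt_ts).
apply: infinite_nat; apply: (@sub_finite_set _ _ (f @^-1` Fs)).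
  by move=> t _; apply: (f_ok t).1.
by apply: finite_preimage => // t s _ _; apply: f_inj.
Qed.

Theorem mainTheorem15 (R : realType) :
  rho_compact (@rhoX R) Qex /\
  equi_invariant_in_mean (@rhoX R) Fex Qex /\
  ~ finitely_equi_invariant (@rhoX R) Fex Qex.
Proof.
split; first exact: Q_compact.
split; first exact: Q_mean_invariant.
exact: Q_not_finitely_invariant.
Qed.
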